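(* Let $(a_N)$ be a sequence of positive numbers and, for each $N$, let $P_{N,a_N}$ be the probability on sequences $(n_j)_{j\ge0}$ of nonnegative integers with $\sum_jn_j=N$ given by $P_{N,a_N}((n_j))\propto e^{-a_N\sum_jjn_j}$, with $\langle n_0\rangle_{N,a_N}$ the expectation of $n_0$. Let $\lambda_N=1-m_N/N$ with integers $0\le m_N\le N$. Suppose $\lambda_N\to\lambda>0$ and $\ln N-(1-\frac{\lambda_N}2)Na_N\to\infty$. Then $P_{N,a_N}(n_0/N\ge\lambda_N)\to0$ and $\lim_{N\to\infty}\frac1N\langle n_0\rangle_{N,a_N}\le\lambda$. If $\ln N-Na_N\to\infty$, then $\frac1N\langle n_0\rangle_{N,a_N}\to0$, i.e. there is no Bose–Einstein condensation.
   Context: This is the canonical ensemble of $N$ noninteracting bosons in a one-dimensional harmonic trap, $n_j$ being the occupation of the $j$-th level and $a_N=\beta(\varepsilon_1-\varepsilon_0)$. *)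

From HB Require Import structures.
From mathcomp Require Import all_boot all_order all_algebra.
From mathcomp Require Import all_classical all_reals all_analysis.
Set Implicit Arguments. Unset Strict Implicit. Unset Printing Implicit Defensive.
Import Order.TTheory GRing.Theory Num.Theory.
Local Open Scope classical_set_scope.
Local Open Scope ring_scope.

(* An occupation sequence (n_j)_{j>=0} of nonnegative integers with finite
   support is encoded canonically as the finite list [n_0; ...; n_K] of its
   values up to the last nonzero entry (the empty list for the zero
   sequence).  n_j = nth 0 s j. *)
Definition canonical_occ (s : seq nat) : bool := (s == [::]) || (last 0%N s != 0%N).

Definition config (N : nat) : set (seq nat) :=
  [set s | canonical_occ s /\ sumn s = N].

Definition occ (s : seq nat) (j : nat) : nat := nth 0%N s j.

Definition energy (s : seq nat) : nat := (\sum_(j < size s) j * occ s j)%N.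

Section Ensemble.
Variable R : realType.

Definition weight (a : R) (s : seq nat) : R := expR (- (a * (energy s)%:R)).

Definition Zpart (N : nat) (a : R) : \bar R :=
  \esum_(s in config N) (weight a s)%:E.

Definition Prob (N : nat) (a : R) (A : set (seq nat)) : R :=
  fine (\esum_(s in config N `&` A) (weight a s)%:E) / fine (Zpart N a).

Definition mean_n0 (N : nat) (a : R) : R :=
  fine (\esum_(s in config N) ((occ s 0)%:R * weight a s)%:E) / fine (Zpart N a).
End Ensemble.

From HB Require Import structures.
From mathcomp Require Import all_boot all_order all_algebra.
From mathcomp Require Import all_classical all_reals all_analysis.
From mathcomp Require Import zify ring lra.
Import Order.TTheory GRing.Theory Num.Theory numFieldNormedType.Exports.
Local Open Scope classical_set_scope.
Local Open Scope ring_scope.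

(* Let W_k be the total Boltzmann weight of the configurations with at most k
   excited particles, i.e. with n_0 >= N - k.  Raising every excited particle
   by one level and moving the surplus of the ground state to level 1 maps
   these configurations injectively onto those with exactly k excited
   particles, at an energy cost of exactly k.  Hence
   W_(k-1) <= (1 - e^(-a k)) W_k, and iterating from M down to m gives
     P(n_0 >= N - m) = W_m / Z <= (1 - e^(-a M))^(M-m) <= 1 / (1 + (M-m) e^(-a M)).
   For M = (N + m)/2 the product (M-m) e^(-a M) is of order
   lambda_N exp(ln N - (1 - lambda_N/2) N a), which tends to infinity; the
   bound on <n_0>/N follows from n_0 <= N - m + N [n_0 >= N - m].  Under the
   second hypothesis, m = N - N/k and M = N give <n_0>/N <= 1/k + o(1) for
   every k. *)

Section EsumExtra.
Context {R : realType} {T : choiceType}.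
Local Open Scope ereal_scope.

Lemma le_esum_subset (A B : set T) (f : T -> \bar R) :
  A `<=` B -> \esum_(i in A) f i <= \esum_(i in B) f i.
Proof.
move=> AB; apply: ge_ereal_sup => _ [X [finX XA] <-].
by apply: ereal_sup_ubound; exists X => //; split => //; exact: subset_trans AB.
Qed.

Lemma esumZl (S : set T) (c : R) (f : T -> \bar R) : (0 <= c)%R ->
  (forall x, 0 <= f x) ->
  \esum_(i in S) (c%:E * f i) = c%:E * \esum_(i in S) f i.
Proof.
rewrite le0r => /orP[/eqP-> _|c_gt0 f_ge0].
  by rewrite mul0e esum1 // => i _; rewrite mul0e.
rewrite /esum -ereal_sup_pZl //; congr ereal_sup; apply/seteqP; split => x /=.
- case=> A SA <-; exists (\sum_(i \in A) f i)%R; first by exists A.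
  by rewrite ge0_mule_fsumr.
- case=> _ [A SA <-] <-; exists A => //.
  by rewrite ge0_mule_fsumr.
Qed.

End EsumExtra.

(* [fine] sends infinities to 0 and [x / 0 = 0], so [Y] may be infinite or 0. *)
Lemma fine_div_le {R : realType} (X Y : \bar R) (c : R) : 0 <= c ->
  (0 <= X)%E -> (0 <= Y)%E -> (X <= c%:E * Y)%E -> fine X / fine Y <= c.
Proof.
move=> c_ge0 X_ge0; case: Y => [y||] //=; rewrite ?invr0 ?mulr0 // lee_fin => y_ge0.
case: X X_ge0 => [x||] //=; rewrite ?mul0r // ?lee_fin => x_ge0 le_xcy.
have [->|y_gt0] := eqVneq y 0; first by rewrite invr0 mulr0.
by rewrite ler_pdivrMr // lt0r y_gt0.
Qed.

Lemma energy_cons (x : nat) (s : seq nat) :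
  energy (x :: s) = (sumn s + energy s)%N.
Proof.
rewrite /energy /= big_ord_recl /= mul0n add0n.
have -> : sumn s = (\sum_(j < size s) occ s j)%N.
  by rewrite sumnE (big_nth 0%N) big_mkord.
by rewrite -big_split; apply: eq_bigr => i _; rewrite /occ /= mulSn.
Qed.

Definition excited_atmost (N k : nat) : set (seq nat) :=
  [set s | (N - k <= occ s 0)%N].

(* Keep exactly [N - k] particles on level 0, move the surplus to level 1 and
   raise every excited particle by one level: for [n_0 >= N - k] this costs
   exactly [k] units of energy. *)
Definition lift_excited (N k : nat) (s : seq nat) : seq nat :=
  (N - k)%N :: (occ s 0 - (N - k))%N :: behead s.

Section LiftExcited.
Variables (N k : nat).
Hypothesis k_gt0_leN : (0 < k <= N)%N.

Lemma lift_excited_in s : (config N `&` excited_atmost N k) s ->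
  (config N `&` excited_atmost N k) (lift_excited N k s).
Proof.
case: s => [|x t] [[cs /= xt] /=]; rewrite /excited_atmost /occ /=; first lia.
move=> le_x; split; last by rewrite /lift_excited /occ /=.
split; last by rewrite /lift_excited /occ /=; lia.
rewrite /lift_excited /canonical_occ /=.
by case: t cs xt {le_x} => [|y t] //= _; lia.
Qed.

Lemma lift_excited_notin s : ~ excited_atmost N k.-1 (lift_excited N k s).
Proof. by rewrite /excited_atmost /occ /=; lia. Qed.

Lemma energy_lift_excited s : (config N `&` excited_atmost N k) s ->
  energy (lift_excited N k s) = (energy s + k)%N.
Proof.
case: s => [|x t] [[_ /= xt]]; rewrite /excited_atmost /occ /= => le_x; first lia.
by rewrite !energy_cons /=; lia.
Qed.

Lemma lift_excited_inj : set_inj (config N `&` excited_atmost N k) (lift_excited N k).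
Proof.
move=> [|x1 t1] [|x2 t2]; rewrite !inE => -[[_ /= s1] e1] [[_ /= s2] e2] //;
  rewrite /lift_excited /excited_atmost /occ /= in e1 e2 * => -[e ->]; try lia.
by congr (_ :: _); lia.
Qed.

End LiftExcited.

Section TruncatedPartitionFunction.
Context {R : realType}.
Local Open Scope ereal_scope.

Lemma expRN_le1 (a x : R) : (0 <= a)%R -> (0 <= x)%R -> (expR (- (a * x)) <= 1)%R.
Proof. by move=> a_ge0 x_ge0; rewrite expR_le1 oppr_le0 mulr_ge0. Qed.

Lemma weight_gt0 (a : R) s : (0 < weight a s)%R.
Proof. exact: expR_gt0. Qed.

Lemma weight_ge0 (a : R) s : 0 <= (weight a s)%:E.
Proof. by rewrite lee_fin ltW // weight_gt0. Qed.

Lemma Zpart_ge0 N (a : R) : 0 <= Zpart N a.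
Proof. by apply: esum_ge0 => s _; exact: weight_ge0. Qed.

Definition Zpart_atmost (N : nat) (a : R) (k : nat) : \bar R :=
  \esum_(s in config N `&` excited_atmost N k) (weight a s)%:E.

Lemma Zpart_atmost_ge0 N (a : R) k : 0 <= Zpart_atmost N a k.
Proof. by apply: esum_ge0 => s _; exact: weight_ge0. Qed.

Lemma Zpart_atmost_le N (a : R) k : Zpart_atmost N a k <= Zpart N a.
Proof. by apply: le_esum_subset => s []. Qed.

Lemma Zpart_atmost_rec N (a : R) k : (0 < k <= N)%N ->
  Zpart_atmost N a k.-1 + (expR (- (a * k%:R)))%:E * Zpart_atmost N a k
  <= Zpart_atmost N a k.
Proof.
move=> hk; rewrite [leRHS](esumID (excited_atmost N k.-1)) => [|s _]; last first.
  exact: weight_ge0.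
have -> : config N `&` excited_atmost N k `&` excited_atmost N k.-1
          = config N `&` excited_atmost N k.-1.
  apply/seteqP; split => s /=; first by case=> -[].
  by case=> cs le_s; split => //; split => //; rewrite /excited_atmost /= in le_s *; lia.
apply: leeD2l; rewrite -esumZl ?expR_ge0 //; last by move=> s; exact: weight_ge0.
rewrite (eq_esum (b := fun s => (weight a (lift_excited N k s))%:E)); last first.
  move=> s Ds; rewrite /weight energy_lift_excited // -EFinM -expRD natrD.
  by congr (expR _)%:E; lra.
rewrite -(esum_image _ _ (fun s => (weight a s)%:E)); last exact: lift_excited_inj.
apply: le_esum_subset => _ [s Ds <-].
by split; [exact: lift_excited_in|exact: lift_excited_notin].
Qed.

Lemma Zpart_atmost_pred_le N (a : R) k : (0 < a)%R -> (0 < k <= N)%N ->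
  Zpart_atmost N a k.-1 <= (1 - expR (- (a * k%:R)))%:E * Zpart_atmost N a k.
Proof.
move=> a_gt0 hk; have rec := Zpart_atmost_rec _ a _ hk.
have q_lt1 : (expR (- (a * k%:R)) < 1)%R.
  by rewrite expR_lt1 oppr_lt0 mulr_gt0 // ltr0n; case/andP: hk.
have := Zpart_atmost_ge0 N a k.
case: (Zpart_atmost N a k) rec => [w||] //= rec w_ge0; last first.
  by rewrite gt0_muley ?leey // lte_fin subr_gt0.
have := Zpart_atmost_ge0 N a k.-1.
case: (Zpart_atmost N a k.-1) rec => [w'||] //= rec _.
by rewrite -EFinM -EFinD !lee_fin in rec *; lra.
Qed.

Lemma Zpart_atmost_le_pow N (a : R) m M : (0 < a)%R -> (m <= M <= N)%N ->
  Zpart_atmost N a m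
  <= ((1 - expR (- (a * M%:R))) ^+ (M - m))%:E * Zpart_atmost N a M.
Proof.
move=> a_gt0 /andP[mM MN]; rewrite -[in leLHS](subKn mM).
elim: (M - m)%N (leq_subr m M) => [_|d IH le_dM]; first by rewrite subn0 mul1e.
have hk : (0 < M - d <= N)%N by lia.
rewrite (_ : (M - d.+1 = (M - d).-1)%N); last by lia.
apply: le_trans (Zpart_atmost_pred_le _ _ _ a_gt0 hk) _.
rewrite exprS EFinM -muleA; apply: lee_pmul.
- by rewrite -[leLHS]/(0%:E) lee_fin subr_ge0 expRN_le1 ?ler0n ?ltW.
- exact: Zpart_atmost_ge0.
- by rewrite lee_fin lerD2l lerN2 ler_expR lerN2 ler_pM2l // ler_nat leq_subr.
- exact/IH/ltnW.
Qed.

End TruncatedPartitionFunction.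

Section OccupationBounds.
Context {R : realType}.
Implicit Types (a : R) (N m M : nat).

Lemma one_sub_frac N m : (0 < N)%N -> (m <= N)%N ->
  1 - m%:R / N%:R = (N - m)%:R / N%:R :> R.
Proof. by move=> N_gt0 mN; rewrite natrB // mulrBl divff // pnatr_eq0 -lt0n. Qed.

Lemma n0_frac_ge_excited N m : (0 < N)%N -> (m <= N)%N ->
  [set s | 1 - m%:R / N%:R <= (occ s 0)%:R / N%:R :> R] = excited_atmost N m.
Proof.
move=> N_gt0 mN; apply/seteqP; split => s;
  by rewrite /excited_atmost /= one_sub_frac // ler_pM2r ?ler_nat // invr_gt0 ltr0n.
Qed.

Lemma Prob_ge0 N a A : 0 <= Prob N a A.
Proof.
rewrite divr_ge0 // fine_ge0 // ?Zpart_ge0 //.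
by apply: esum_ge0 => s _; exact: weight_ge0.
Qed.

Lemma Prob_excited_atmost_le N a m M : 0 < a -> (m <= M <= N)%N ->
  Prob N a (excited_atmost N m) <= (1 - expR (- (a * M%:R))) ^+ (M - m).
Proof.
move=> a_gt0 mMN; have q_ge0 : 0 <= 1 - expR (- (a * M%:R)).
  by rewrite subr_ge0 expRN_le1 ?ler0n ?ltW.
apply: fine_div_le; rewrite ?exprn_ge0 ?Zpart_atmost_ge0 ?Zpart_ge0 //.
apply: le_trans (Zpart_atmost_le_pow _ _ _ _ a_gt0 mMN) _.
by apply: lee_wpmul2l; rewrite ?lee_fin ?exprn_ge0 ?Zpart_atmost_le.
Qed.

Lemma mean_n0_ge0 N a : 0 <= mean_n0 N a.
Proof.
rewrite divr_ge0 // fine_ge0 // ?Zpart_ge0 //.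
by apply: esum_ge0 => s _; rewrite lee_fin mulr_ge0 // ltW // weight_gt0.
Qed.

Lemma occ0_le_config N s : config N s -> (occ s 0 <= N)%N.
Proof. by case=> _ <-; case: s => [|x t] //=; rewrite /occ /= leq_addr. Qed.

Lemma mean_n0_le N a m M : 0 < a -> (m <= M <= N)%N ->
  mean_n0 N a <= (N - m)%:R + N%:R * (1 - expR (- (a * M%:R))) ^+ (M - m).
Proof.
move=> a_gt0 mMN; set c := _ ^+ _.
have c_ge0 : 0 <= c by rewrite exprn_ge0 // subr_ge0 expRN_le1 ?ler0n ?ltW.
apply: fine_div_le; rewrite ?addr_ge0 ?mulr_ge0 ?Zpart_ge0 //.
  by apply: esum_ge0 => s _; rewrite lee_fin mulr_ge0 // ltW // weight_gt0.
(* [n_0 <= N - m] unless the configuration has at most [m] excited particles *)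
have n0_le s : config N s -> ((occ s 0)%:R * weight a s <=
    (N - m)%:R * weight a s
    + N%:R * (if s \in excited_atmost N m then weight a s else 0))%R.
  move=> /occ0_le_config n0_le_N; have w_gt0 := weight_gt0 a s.
  case: ifPn => [_|]; first by rewrite -mulrDl ler_pM2r // -natrD ler_nat; lia.
  by rewrite notin_setE /excited_atmost /= mulr0 addr0 ler_pM2r // ler_nat; lia.
apply: (@le_trans _ _ ((N - m)%:R%:E * Zpart N a + N%:R%:E * Zpart_atmost N a m)%E).
  rewrite /Zpart_atmost [X in (_ <= _ + _ * X)%E]esum_mkcondr.
  rewrite -!esumZl // => [|s|s]; last 2 first.
  - by case: ifP => _; [exact: weight_ge0|].
  - exact: weight_ge0.
  rewrite -esumD => [|s _|s _]; last 2 first.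
  - by rewrite mule_ge0 // weight_ge0.
  - by rewrite mule_ge0 //; case: ifP => _; [exact: weight_ge0|].
  apply: le_esum => s /n0_le; rewrite -lee_fin => /le_trans; apply.
  by rewrite EFinD !EFinM; case: ifP.
rewrite EFinD ge0_muleDl ?lee_fin ?mulr_ge0 // EFinM -muleA leeD2l // lee_wpmul2l //.
apply: le_trans (Zpart_atmost_le_pow _ _ _ _ a_gt0 mMN) _.
by apply: lee_wpmul2l; rewrite ?lee_fin ?Zpart_atmost_le.
Qed.

Lemma mean_n0_frac_le N a m M : 0 < a -> (0 < N)%N -> (m <= M <= N)%N ->
  N%:R^-1 * mean_n0 N a
  <= (1 - m%:R / N%:R) + (1 - expR (- (a * M%:R))) ^+ (M - m).
Proof.
move=> a_gt0 N_gt0 mMN; have N_gt0' : 0 < N%:R :> R by rewrite ltr0n.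
apply: le_trans (ler_wpM2l _ (mean_n0_le _ _ _ _ a_gt0 mMN)) _.
  by rewrite invr_ge0 ltW.
rewrite mulrDr mulrA mulVf ?gt_eqF // mul1r one_sub_frac 1?mulrC //.
by case/andP: mMN; apply: leq_trans.
Qed.

Lemma mean_n0_frac_le_inv N a k : 0 < a -> (0 < N)%N -> (0 < k)%N ->
  N%:R^-1 * mean_n0 N a <= k%:R^-1 + (1 - expR (- (a * N%:R))) ^+ (N %/ k).
Proof.
move=> a_gt0 N_gt0 k_gt0; have le_kN : (N %/ k <= N)%N := leq_div N k.
have := mean_n0_frac_le _ _ (N - N %/ k) N a_gt0 N_gt0.
rewrite leq_subr leqnn subKn // => /(_ isT) /le_trans; apply.
rewrite lerD2r one_sub_frac ?leq_subr // subKn // ler_pdivrMr ?ltr0n // mulrC.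
by rewrite ler_pdivlMr ?ltr0n // -natrM ler_nat leq_divM.
Qed.

End OccupationBounds.

Section Asymptotics.
Context {R : realType}.

Lemma expr1B_le_inv (x : R) n : 0 <= x <= 1 -> (1 - x) ^+ n <= (1 + n%:R * x)^-1.
Proof.
move=> /andP[x_ge0 x_le1].
rewrite -div1r ler_pdivlMr ?ltr_pwDl ?mulr_ge0 //.
elim: n => [|n IH]; first by rewrite expr0 mul0r addr0 mul1r.
have p_ge0 : 0 <= (1 - x) ^+ n by rewrite exprn_ge0 // subr_ge0.
rewrite exprSr -mulrA; apply: le_trans IH; apply: ler_wpM2l => //.
have n_ge0 : (0 : R) <= n%:R by rewrite ler0n.
by rewrite -natr1; nra.
Qed.

Lemma power_tail_cvg0 (q : nat -> R) (d : nat -> nat) :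
  (forall N, 0 <= q N <= 1) ->
  (fun N => (d N)%:R * q N) @ \oo --> +oo ->
  (fun N => (1 - q N) ^+ d N) @ \oo --> 0.
Proof.
move=> q01 dq_cvgy.
apply: (@squeeze_cvgr _ _ _ _ (cst 0) (fun N => (1 + (d N)%:R * q N)^-1)).
- near=> N; have /andP[q_ge0 q_le1] := q01 N.
  by rewrite exprn_ge0 ?subr_ge0 //= expr1B_le_inv ?q01.
- exact: cvg_cst.
- rewrite gtr0_cvgV0; last by near=> N; rewrite ltr_pwDl ?mulr_ge0 //; case/andP: (q01 N).
  by apply: ger_cvgy dq_cvgy; near=> N; rewrite lerDr.
Unshelve. all: by end_near.
Qed.

Lemma le_limn_esup_near (u v : (\bar R)^nat) :
  (\forall n \near \oo, (u n <= v n)%E) -> (limn_esup u <= limn_esup v)%E.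
Proof.
move=> [n0 _ le_uv]; rewrite !limn_esup_lim.
apply: lee_lim; [exact: is_cvg_esups|exact: is_cvg_esups|].
near=> n; apply: ge_ereal_sup => _ [k /= nk <-].
apply: le_trans (le_uv k _) _; first by apply: leq_trans nk; near: n; exists n0.
by apply: ereal_sup_ubound; exists k.
Unshelve. all: by end_near.
Qed.

Lemma expR_lnD (n x : R) : 0 < n -> expR (ln n + x) = n * expR x.
Proof. by move=> n_gt0; rewrite expRD lnK. Qed.

Lemma half_gap_ge (a : R) N m M : 0 <= a -> (0 < N)%N -> (m <= N)%N ->
  (M * 2 <= N + m <= M * 2 + 1)%N ->
  ((1 - m%:R / N%:R) - N%:R^-1) / 2
    * expR (ln (N%:R : R) - (1 - (1 - m%:R / N%:R) / 2) * N%:R * a)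
  <= (M - m)%:R * expR (- (a * M%:R)).
Proof.
move=> a_ge0 N_gt0 mN M2; set n : R := N%:R; set x : R := m%:R.
have n_gt0 : 0 < n by rewrite ltr0n.
have mM : (m <= M)%N by lia.
have [le_2M le_Nm] : M%:R * 2 <= n + x /\ n + x <= M%:R * 2 + 1.
  by case/andP: M2; rewrite -!(ler_nat R) !natrD natrM.
rewrite (_ : ln n - _ = ln n + - ((n + x) / 2 * a)); last first.
  by congr (_ + _); field; rewrite gt_eqF.
rewrite expR_lnD // mulrA (_ : _ * n = (n - x - 1) / 2); last by field; rewrite gt_eqF.
apply: le_trans (_ : (M - m)%:R * expR (- ((n + x) / 2 * a)) <= _).
  by apply: ler_wpM2r; rewrite ?expR_ge0 // natrB // ler_pdivrMr //; lra.
by apply: ler_wpM2l; rewrite ?ler0n // ler_expR lerN2; nra.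
Qed.

Lemma quotient_gap_ge (a : R) N k : 0 <= a -> (0 < N)%N -> (0 < k)%N ->
  expR (ln (N%:R : R) - N%:R * a) / k%:R - 1 <= (N %/ k)%:R * expR (- (a * N%:R)).
Proof.
move=> a_ge0 N_gt0 k_gt0; set e := expR (- (a * N%:R)).
have e01 : 0 <= e <= 1 by rewrite expR_ge0 expRN_le1 ?ler0n.
have k_gt0' : 0 < k%:R :> R by rewrite ltr0n.
have le_Nk : N%:R / k%:R - 1 <= (N %/ k)%:R :> R.
  rewrite lerBlDr ler_pdivrMr // natr1 -natrM ler_nat.
  exact: ltnW (ltn_ceil N k_gt0).
rewrite expR_lnD ?ltr0n // [N%:R * a]mulrC -/e.
apply: le_trans (_ : (N%:R / k%:R - 1) * e <= _).
  by rewrite mulrBl mul1r mulrAC; case/andP: e01; lra.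
by apply: ler_wpM2r; case/andP: e01.
Qed.

Lemma quotient_gap_cvgy (a : nat -> R) k : (forall N, 0 < a N) -> (0 < k)%N ->
  (fun N => ln (N%:R : R) - N%:R * a N) @ \oo --> +oo ->
  (fun N => (N %/ k)%:R * expR (- (a N * N%:R))) @ \oo --> +oo.
Proof.
move=> a_gt0 k_gt0 /cvgryPge g_ge; apply/cvgryPge => A.
near=> N.
have N_gt0 : (0 < N)%N by near: N; exact: nbhs_infty_gt.
have A_le_g : (A + 1) * k%:R <= ln (N%:R : R) - N%:R * a N by near: N; exact: g_ge.
apply: le_trans (quotient_gap_ge _ _ _ (ltW (a_gt0 N)) N_gt0 k_gt0).
rewrite lerBrDr ler_pdivlMr ?ltr0n //; apply: le_trans A_le_g _.
by have := expR_ge1Dx (ln (N%:R : R) - N%:R * a N); lra.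
Unshelve. all: by end_near.
Qed.

End Asymptotics.

Section Condensation.
Context {R : realType} (a : nat -> R) (m : nat -> nat) (lam : R).
Hypotheses (a_gt0 : forall N, 0 < a N) (mN : forall N, (m N <= N)%N).
Hypotheses (lam_cvg : (fun N => 1 - (m N)%:R / N%:R) @ \oo --> lam) (lam_gt0 : 0 < lam).
Hypothesis h_cvgy :
  (fun N => ln (N%:R : R) - (1 - (1 - (m N)%:R / N%:R) / 2) * N%:R * a N) @ \oo --> +oo.

Let M N := ((N + m N) %/ 2)%N.

Let mMN N : (m N <= M N <= N)%N.
Proof. by have := mN N; rewrite /M; lia. Qed.

Lemma half_gap_cvgy :
  (fun N => (M N - m N)%:R * expR (- (a N * (M N)%:R))) @ \oo --> +oo.
Proof.
move/cvgryPge: h_cvgy => h_ge; apply/cvgryPge => A.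
(* [lra] ignores section hypotheses, hence the explicit [have]. *)
have lam34_lt : 3 * lam / 4 < lam by have := lam_gt0; lra.
near=> N.
have N_gt0 : (0 < N)%N by near: N; exact: nbhs_infty_gt.
have lamN_ge : 3 * lam / 4 <= 1 - (m N)%:R / N%:R.
  by near: N; exact: (cvgr_ge lam lam_cvg _ lam34_lt).
have invN_le : N%:R^-1 <= lam / 4.
  rewrite -[lam / 4]invf_div lef_pV2 ?posrE ?ltr0n ?divr_gt0 //.
  by near: N; exact: nbhs_infty_ger.
have A_le_h : 4 * A / lam
    <= ln (N%:R : R) - (1 - (1 - (m N)%:R / N%:R) / 2) * N%:R * a N.
  by near: N; exact: h_ge.
set h := ln _ - _ in A_le_h *.
apply: le_trans (half_gap_ge _ _ _ _ (ltW (a_gt0 N)) N_gt0 (mN N) _); last first.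
  by have := mN N; rewrite /M; lia.
have h_le : h <= expR h by have := expR_ge1Dx h; lra.
apply: (@le_trans _ _ (lam / 4 * expR h)).
  by rewrite -ler_pdivrMl ?divr_gt0 // invf_div mulrAC (le_trans A_le_h h_le).
by rewrite -/h; apply: ler_wpM2r; rewrite ?expR_ge0 //; lra.
Unshelve. all: by end_near.
Qed.

Lemma half_gap_tail_cvg0 :
  (fun N => (1 - expR (- (a N * (M N)%:R))) ^+ (M N - m N)) @ \oo --> 0.
Proof.
apply: power_tail_cvg0 half_gap_cvgy => N.
by rewrite expR_ge0 expRN_le1 ?ler0n ?ltW.
Qed.

Lemma Prob_n0_frac_ge_cvg0 :
  (fun N => Prob N (a N) [set s | 1 - (m N)%:R / N%:R <= ((occ s 0)%:R / N%:R : R)])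
    @ \oo --> 0.
Proof.
apply: squeeze_cvgr (cvg_cst 0) half_gap_tail_cvg0; near=> N.
have N_gt0 : (0 < N)%N by near: N; exact: nbhs_infty_gt.
by rewrite n0_frac_ge_excited ?Prob_ge0 ?Prob_excited_atmost_le ?mMN.
Unshelve. all: by end_near.
Qed.

Lemma limn_esup_mean_n0_le :
  (limn_esup (fun N => ((N%:R)^-1 * mean_n0 N (a N))%:E) <= lam%:E)%E.
Proof.
set bound := fun N => 1 - (m N)%:R / N%:R
  + (1 - expR (- (a N * (M N)%:R))) ^+ (M N - m N).
have bound_cvg : (fun N => (bound N)%:E) @ \oo --> lam%:E.
  apply: cvg_EFin; first exact: nearW.
  by rewrite -[lam]addr0; apply: cvgD; [exact: lam_cvg|exact: half_gap_tail_cvg0].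
rewrite -(cvg_limn_einf_sup bound_cvg).2; apply: le_limn_esup_near; near=> N.
have N_gt0 : (0 < N)%N by near: N; exact: nbhs_infty_gt.
by rewrite lee_fin mean_n0_frac_le ?mMN.
Unshelve. all: by end_near.
Qed.

End Condensation.

Lemma mean_n0_frac_cvg0 {R : realType} (a : nat -> R) : (forall N, 0 < a N) ->
  (fun N => ln (N%:R : R) - N%:R * a N) @ \oo --> +oo ->
  (fun N => (N%:R)^-1 * mean_n0 N (a N)) @ \oo --> 0.
Proof.
move=> a_gt0 g_cvgy; apply/cvgrPdist_lt => e e_gt0.
pose k := (Num.truncn (2 / e)).+1.
have invk_lt : k%:R^-1 < e / 2.
  by rewrite -[e / 2]invf_div ltf_pV2 ?posrE ?ltr0n ?divr_gt0 // truncnS_gt.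
have tail0 : (fun N => (1 - expR (- (a N * N%:R))) ^+ (N %/ k)) @ \oo --> 0.
  apply: power_tail_cvg0 (quotient_gap_cvgy _ k a_gt0 (ltn0Sn _) g_cvgy) => N.
  by rewrite expR_ge0 expRN_le1 ?ler0n ?ltW.
near=> N; have N_gt0 : (0 < N)%N by near: N; exact: nbhs_infty_gt.
rewrite sub0r normrN ger0_norm; last by apply: mulr_ge0; rewrite ?invr_ge0 ?mean_n0_ge0.
apply: le_lt_trans (mean_n0_frac_le_inv _ _ k (a_gt0 N) N_gt0 (ltn0Sn _)) _.
have : (1 - expR (- (a N * N%:R))) ^+ (N %/ k) < e / 2.
  by near: N; apply: (cvgr_lt 0 tail0); rewrite divr_gt0.
lra.
Unshelve. all: by end_near.
Qed.

Theorem proposition2 (R : realType) (a : nat -> R) (ha : forall N, 0 < a N) :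
  (forall (m : nat -> nat) (lam : R),
     (forall N, (m N <= N)%N) ->
     (fun N => 1 - (m N)%:R / N%:R) @ \oo --> lam ->
     0 < lam ->
     (fun N => ln (N%:R : R) - (1 - (1 - (m N)%:R / N%:R) / 2) * N%:R * a N)
       @ \oo --> +oo ->
     (fun N => Prob N (a N)
                 [set s | 1 - (m N)%:R / N%:R <= ((occ s 0)%:R / N%:R : R)])
       @ \oo --> (0 : R)
     /\ (limn_esup (fun N => ((N%:R)^-1 * mean_n0 N (a N))%:E) <= lam%:E)%E) /\
  ((fun N => ln (N%:R : R) - N%:R * a N) @ \oo --> +oo ->
     (fun N => (N%:R)^-1 * mean_n0 N (a N)) @ \oo --> (0 : R)).
Proof.
split=> [m lam mN lam_cvg lam_gt0 h_cvgy | g_cvgy].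
  split; first exact: Prob_n0_frac_ge_cvg0 ha mN lam_cvg lam_gt0 h_cvgy.
  exact: limn_esup_mean_n0_le ha mN lam_cvg lam_gt0 h_cvgy.
exact: mean_n0_frac_cvg0 ha g_cvgy.
Qed.
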